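(* Let $\phi:\mathbb{R}^n\to[-\infty,\infty]$ be a proper nearly convex function, $\Theta\subset\mathbb{R}^n$ a nearly convex set, and $G:\mathbb{R}^n\rightrightarrows\mathbb{R}^q$ a nearly convex set-valued mapping. Suppose $$\operatorname{ri}(\operatorname{dom}\phi)\cap\operatorname{ri}(\operatorname{dom} G)\cap\operatorname{ri}\Theta\neq\emptyset\quad\text{and}\quad 0\in\operatorname{ri}\big(G(\Theta\cap\operatorname{dom}\phi)\big).$$ Let $v_G(x,y^* )=\inf\{\langle -y^*,y\rangle: y\in G(x)\}$ and $h(y^* )=\inf\{\phi(x)+v_G(x,y^* ):x\in\Theta\}$, which is understood as $h(y^* )=\inf\{\phi(x)-\langle y^*,y\rangle: x\in\Theta,\ y\in G(x)\}$. Then $\mathcal{V}=\mathcal{V}_d$, where $\mathcal{V}=\inf\{\phi(x):x\in\Theta,\ 0\in G(x)\}$ and $\mathcal{V}_d=\sup_{y^*\in\mathbb{R}^q}h(y^* )$.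
   Context: A set $\Omega$ is nearly convex if there is a convex set $C$ with $C\subset\Omega\subset\overline{C}$; $\operatorname{ri}\Omega=\{a\in\Omega:\exists\delta>0,\ B(a;\delta)\cap\operatorname{aff}\Omega\subset\Omega\}$. A function is nearly convex if its epigraph is nearly convex, proper if its domain $\{\phi<\infty\}$ is nonempty and $\phi>-\infty$. For $G:\mathbb{R}^n\rightrightarrows\mathbb{R}^q$: $\operatorname{dom}G=\{x:G(x)\neq\emptyset\}$, $G$ nearly convex if $\operatorname{gph}G=\{(x,y):y\in G(x)\}$ is; $G(S)=\bigcup_{x\in S}G(x)$. Convention $\inf\emptyset=\infty$. *)

(* R^n is 'rV[R]_n, R^n x R^q is encoded as 'rV[R]_(n+q)
   via row_mx (block concatenation). *)
From HB Require Import structures.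
From mathcomp Require Import all_boot all_order all_algebra.
From mathcomp Require Import boolp classical_sets reals constructive_ereal ereal.
Set Implicit Arguments. Unset Strict Implicit. Unset Printing Implicit Defensive.
Import Order.TTheory GRing.Theory Num.Theory.
Local Open Scope classical_set_scope.
Local Open Scope ring_scope.

Section Defs.
Variable R : realType.

Definition dotv (k : nat) (u v : 'rV[R]_k) : R := \sum_(i < k) u 0 i * v 0 i.
Definition sqdist (k : nat) (u v : 'rV[R]_k) : R := dotv (u - v) (u - v).

Definition eball (k : nat) (a : 'rV[R]_k) (d : R) : set 'rV[R]_k :=
  [set x | sqdist x a < d ^+ 2].

Definition convex_set (k : nat) (C : set 'rV[R]_k) : Prop :=
  forall x y t, C x -> C y -> 0 <= t <= 1 -> C (t *: x + (1 - t) *: y).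

Definition eclosure (k : nat) (C : set 'rV[R]_k) : set 'rV[R]_k :=
  [set x | forall e : R, 0 < e -> exists2 c, C c & sqdist x c < e ^+ 2].

Definition nearly_convex (k : nat) (O : set 'rV[R]_k) : Prop :=
  exists C : set 'rV[R]_k, [/\ convex_set C, C `<=` O & O `<=` eclosure C].

Definition aff (k : nat) (O : set 'rV[R]_k) : set 'rV[R]_k :=
  [set x | exists (m : nat) (p : 'I_m -> 'rV[R]_k) (c : 'I_m -> R),
     [/\ forall i, O (p i), \sum_(i < m) c i = 1 & x = \sum_(i < m) c i *: p i]].

Definition ri (k : nat) (O : set 'rV[R]_k) : set 'rV[R]_k :=
  [set a | O a /\ exists2 d : R, 0 < d & eball a d `&` aff O `<=` O].

Definition epigraph (n : nat) (phi : 'rV[R]_n -> \bar R) : set 'rV[R]_(n + 1) :=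
  [set z | exists x (a : R), z = row_mx x (a%:M) /\ (phi x <= a%:E)%E].

Definition fdom (n : nat) (phi : 'rV[R]_n -> \bar R) : set 'rV[R]_n :=
  [set x | (phi x < +oo)%E].

Definition proper_fun (n : nat) (phi : 'rV[R]_n -> \bar R) : Prop :=
  fdom phi !=set0 /\ forall x, (-oo < phi x)%E.

Definition nearly_convex_fun (n : nat) (phi : 'rV[R]_n -> \bar R) : Prop :=
  nearly_convex (epigraph phi).

Definition sv_dom (n q : nat) (G : 'rV[R]_n -> set 'rV[R]_q) : set 'rV[R]_n :=
  [set x | G x !=set0].

Definition sv_graph (n q : nat) (G : 'rV[R]_n -> set 'rV[R]_q) : set 'rV[R]_(n + q) :=
  [set z | exists x y, z = row_mx x y /\ G x y].

Definition nearly_convex_sv (n q : nat) (G : 'rV[R]_n -> set 'rV[R]_q) : Prop :=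
  nearly_convex (sv_graph G).

Definition sv_image (n q : nat) (G : 'rV[R]_n -> set 'rV[R]_q) (S : set 'rV[R]_n)
  : set 'rV[R]_q := \bigcup_(x in S) G x.

(* primal value V = inf { phi x : x in Theta, 0 in G x }  (inf of empty = +oo) *)
Definition primal_value (n q : nat) (phi : 'rV[R]_n -> \bar R) (Theta : set 'rV[R]_n)
  (G : 'rV[R]_n -> set 'rV[R]_q) : \bar R :=
  ereal_inf [set phi x | x in [set x | Theta x /\ G x 0]].

Definition dual_fun (n q : nat) (phi : 'rV[R]_n -> \bar R) (Theta : set 'rV[R]_n)
  (G : 'rV[R]_n -> set 'rV[R]_q) (ys : 'rV[R]_q) : \bar R :=
  ereal_inf [set e : \bar R | exists x y,
     [/\ Theta x, G x y & e = (phi x - (dotv ys y)%:E)%E]].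

Definition dual_value (n q : nat) (phi : 'rV[R]_n -> \bar R) (Theta : set 'rV[R]_n)
  (G : 'rV[R]_n -> set 'rV[R]_q) : \bar R :=
  ereal_sup (range (dual_fun phi Theta G)).

End Defs.

From mathcomp Require Import all_boot all_order all_algebra.
From mathcomp Require Import boolp classical_sets reals constructive_ereal ereal.
From mathcomp Require Import ring lra.
Import Order.TTheory GRing.Theory Num.Theory.
Local Open Scope classical_set_scope.
Local Open Scope ring_scope.
Set Implicit Arguments. Unset Strict Implicit. Unset Printing Implicit Defensive.

(* Weak duality is immediate; for the converse take a <= V and produce ys with h ys >= a.
   Choose convex sets C1, C2, C3 lying between epi phi, Theta, gph G and their closures.
   The pairs (y, t) with (x, y) in C3, (x, t') in C1, x in C2 and t' <= t form a convex set K,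
   and K is dense in the set of all (y, t) with x in Theta, y in G x, phi x <= t: approximate
   each of the three data by points whose x-component lies on the segment towards a common
   relative interior point x0, which is possible because near a relative interior point the
   affine hull is covered by boundedly liftable convex combinations of finitely many points.
   Now t >= a whenever (0, t) is in K, and 0 is relatively interior to the projection of K,
   so a separation in the affine hull of that projection, carried out one coordinate at a
   time by a supremum of slopes, yields ys with a + <ys, y> <= t on K, hence on its closure. *)

Section InnerProduct.
Variable R : realType.
Implicit Types (k : nat).

Lemma dotvC k (u v : 'rV[R]_k) : dotv u v = dotv v u.
Proof. by apply: eq_bigr => i _; rewrite mulrC. Qed.

Lemma dotvDl k (u v w : 'rV[R]_k) : dotv (u + v) w = dotv u w + dotv v w.
Proof. by rewrite /dotv -big_split /=; apply: eq_bigr => i _; rewrite mxE mulrDl. Qed.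

Lemma dotvZl k a (u w : 'rV[R]_k) : dotv (a *: u) w = a * dotv u w.
Proof. by rewrite /dotv mulr_sumr; apply: eq_bigr => i _; rewrite mxE mulrA. Qed.

Lemma dotvDr k (u v w : 'rV[R]_k) : dotv w (u + v) = dotv w u + dotv w v.
Proof. by rewrite dotvC dotvDl !(dotvC w). Qed.

Lemma dotvZr k a (u w : 'rV[R]_k) : dotv w (a *: u) = a * dotv w u.
Proof. by rewrite dotvC dotvZl dotvC. Qed.

Lemma dotvNr k (u v : 'rV[R]_k) : dotv v (- u) = - dotv v u.
Proof. by rewrite -scaleN1r dotvZr mulN1r. Qed.

Lemma dotvBr k (u v w : 'rV[R]_k) : dotv w (u - v) = dotv w u - dotv w v.
Proof. by rewrite dotvDr dotvNr. Qed.

Lemma dotv0r k (u : 'rV[R]_k) : dotv u 0 = 0.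
Proof. by rewrite -(scale0r 0) dotvZr mul0r. Qed.

Lemma dotv_delta k (v : 'rV[R]_k) (j : 'I_k) : dotv (delta_mx 0 j) v = v 0 j.
Proof.
rewrite /dotv (bigD1 j) //= big1 ?addr0; first by rewrite mxE !eqxx mul1r.
by move=> i /negbTE ij; rewrite mxE ij andbF mul0r.
Qed.

Lemma dotv_mulmx k p (c : 'rV[R]_p) (u : 'rV[R]_k) (M : 'M[R]_(k, p)) :
  dotv c (u *m M) = dotv (c *m M^T) u.
Proof.
rewrite /dotv; under eq_bigr do rewrite mxE mulr_sumr.
rewrite exchange_big /=; apply: eq_bigr => j _; rewrite mxE mulr_suml.
by apply: eq_bigr => i _; rewrite mxE; ring.
Qed.

Lemma dotv_row_mx m p (a c : 'rV[R]_m) (b d : 'rV[R]_p) :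
  dotv (row_mx a b) (row_mx c d) = dotv a c + dotv b d.
Proof.
rewrite /dotv big_split_ord /=; congr (_ + _); apply: eq_bigr => i _;
by rewrite ?(row_mxEl, row_mxEr).
Qed.

Lemma dotvv_ge0 k (u : 'rV[R]_k) : 0 <= dotv u u.
Proof. by apply: sumr_ge0 => i _; rewrite -expr2 sqr_ge0. Qed.

Lemma sqdist_ge0 k (u v : 'rV[R]_k) : 0 <= sqdist u v.
Proof. exact: dotvv_ge0. Qed.

Lemma sqdist_row_mx m p (a c : 'rV[R]_m) (b d : 'rV[R]_p) :
  sqdist (row_mx a b) (row_mx c d) = sqdist a c + sqdist b d.
Proof. by rewrite /sqdist opp_row_mx add_row_mx dotv_row_mx. Qed.

Lemma sqdist_row_mxl m p (a c : 'rV[R]_m) (b d : 'rV[R]_p) :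
  sqdist a c <= sqdist (row_mx a b) (row_mx c d).
Proof. by rewrite sqdist_row_mx lerDl sqdist_ge0. Qed.

Lemma sqdist_row_mxr m p (a c : 'rV[R]_m) (b d : 'rV[R]_p) :
  sqdist b d <= sqdist (row_mx a b) (row_mx c d).
Proof. by rewrite sqdist_row_mx lerDr sqdist_ge0. Qed.

Lemma sqdist_rsubmx m p (a : 'rV[R]_m) (b : 'rV[R]_p) z :
  sqdist b (rsubmx z) <= sqdist (row_mx a b) z.
Proof. by rewrite -{2}(hsubmxK z) sqdist_row_mxr. Qed.

Lemma sqdist_translate k (x d : 'rV[R]_k) s :
  sqdist (x + s *: d) x = s ^+ 2 * dotv d d.
Proof. by rewrite /sqdist addrAC subrr add0r dotvZl dotvZr mulrA -expr2. Qed.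

Lemma sqr_coord_le_sqdist k (u v : 'rV[R]_k) i : (u 0 i - v 0 i) ^+ 2 <= sqdist u v.
Proof.
rewrite /sqdist /dotv (bigD1 i) //= !mxE -expr2 lerDl.
by apply: sumr_ge0 => j _; rewrite -expr2 sqr_ge0.
Qed.

Lemma coord_lt_sqdist k (u v : 'rV[R]_k) e i : 0 < e -> sqdist u v < e ^+ 2 ->
  `|u 0 i - v 0 i| < e.
Proof.
move=> e0 h; have := le_lt_trans (sqr_coord_le_sqdist u v i) h.
by rewrite -real_normK ?num_real // ltr_pXn2r // ?nnegrE ?normr_ge0 ?ltW // gtr0_norm.
Qed.

Lemma sqdist_le_coord k (u v : 'rV[R]_k) r :
  (forall i, `|u 0 i - v 0 i| <= r) -> sqdist u v <= k%:R * r ^+ 2.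
Proof.
move=> h; rewrite /sqdist /dotv.
have -> : k%:R * r ^+ 2 = \sum_(i < k) r ^+ 2 by rewrite sumr_const card_ord mulr_natl.
apply: ler_sum => i _; rewrite !mxE -expr2 -real_normK ?num_real //.
by rewrite lerXn2r ?nnegrE ?normr_ge0 ?h // (le_trans _ (h i)).
Qed.

Lemma mulmx_coord_bound m p (K : 'M[R]_(m, p)) (u : 'rV[R]_m) r j :
  (forall i, `|u 0 i| <= r) -> `|(u *m K) 0 j| <= r * \sum_(i < m) `|K i j|.
Proof.
move=> h; rewrite !mxE mulr_sumr (le_trans (ler_norm_sum _ _ _)) //.
by apply: ler_sum => i _; rewrite normrM ler_wpM2r.
Qed.

Lemma dotv_dist k (w u v : 'rV[R]_k) e : 0 < e -> sqdist u v < e ^+ 2 ->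
  `|dotv w u - dotv w v| <= e * \sum_i `|w 0 i|.
Proof.
move=> e0 h; rewrite -dotvBr /dotv mulr_sumr (le_trans (ler_norm_sum _ _ _)) //.
apply: ler_sum => i _; rewrite normrM mulrC ler_wpM2r // !mxE ltW //.
exact: coord_lt_sqdist.
Qed.

End InnerProduct.

Section Convexity.
Variable R : realType.
Implicit Types (m p : nat).

Lemma convex_set_comb m (C : set 'rV[R]_m) : convex_set C ->
  forall N (z : 'I_N -> 'rV[R]_m) (nu : 'I_N -> R),
  (forall i, C (z i)) -> (forall i, 0 <= nu i) -> \sum_i nu i = 1 ->
  C (\sum_i nu i *: z i).
Proof.
move=> cC; elim=> [|N IH] z nu Cz nu0; first by rewrite big_ord0 => /eqP; rewrite eq_sym oner_eq0.
rewrite !big_ord_recr /=; set s := \sum_(i < N) _ => s1.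
have s0 : 0 <= s by apply: sumr_ge0.
have -> : nu ord_max = 1 - s by rewrite -s1 addrAC subrr add0r.
have [s_0|sn0] := eqVneq s 0.
  rewrite s_0 subr0 scale1r big1 ?add0r // => i _.
  by move/psumr_eq0P: s_0 => -> //; rewrite ?scale0r // => j _; apply: nu0.
have sp : 0 < s by rewrite lt_def sn0.
have -> : \sum_(i < N) nu (widen_ord (leqnSn N) i) *: z (widen_ord (leqnSn N) i) =
    s *: \sum_(i < N) (nu (widen_ord (leqnSn N) i) / s) *: z (widen_ord (leqnSn N) i).
  rewrite scaler_sumr; apply: eq_bigr => i _.
  by rewrite scalerA mulrCA divff ?mulr1.
apply: cC; first (apply: IH => //; first by move=> i; rewrite divr_ge0).
- by rewrite -mulr_suml divff.
- exact: Cz.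
- by rewrite s0 -s1 lerDl nu0.
Qed.

Lemma convex_set_simplex m k (C : set 'rV[R]_m) (B : 'M[R]_(k, m)) c0 :
  convex_set C -> C c0 -> (forall i, C (c0 + row i B)) ->
  forall mu : 'rV[R]_k, (forall i, 0 <= mu 0 i) -> \sum_i mu 0 i <= 1 ->
  C (c0 + mu *m B).
Proof.
move=> cC Cc0 CB mu mu0 mu1.
pose z (i : 'I_k.+1) := oapp (fun j => c0 + row j B) c0 (unlift ord0 i).
pose nu (i : 'I_k.+1) := oapp (fun j => mu 0 j) (1 - \sum_i mu 0 i) (unlift ord0 i).
have nuS (i : 'I_k) : nu (lift ord0 i) = mu 0 i by rewrite /nu liftK.
have zS (i : 'I_k) : z (lift ord0 i) = c0 + row i B by rewrite /z liftK.
have -> : c0 + mu *m B = \sum_i nu i *: z i.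
  apply/esym; rewrite big_ord_recl; under eq_bigr do rewrite nuS zS.
  rewrite /nu /z unlift_none /=.
  rewrite mulmx_sum_row scalerBl scale1r scaler_suml -addrA; congr (_ + _).
  by rewrite addrC -sumrB; apply: eq_bigr => i _; rewrite scalerDr addrAC subrr add0r.
apply: convex_set_comb => // [i|i|].
- by rewrite /z; case: (unlift ord0 i).
- by rewrite /nu; case: (unlift ord0 i) => /= [j|]; rewrite ?subr_ge0.
- by rewrite big_ord_recl; under eq_bigr do rewrite nuS; rewrite /nu unlift_none /= subrK.
Qed.

Lemma aff_self m (O : set 'rV[R]_m) x : O x -> aff O x.
Proof.
move=> Ox; exists 1%N, (fun _ => x), (fun _ => 1).
by rewrite !big_ord1 scale1r.
Qed.

Lemma aff_comb3 m (O : set 'rV[R]_m) a b c (al be ga : R) :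
  O a -> O b -> O c -> al + be + ga = 1 ->
  aff O (al *: a + be *: b + ga *: c).
Proof.
move=> Oa Ob Oc s1.
exists 3%N, (nth 0 [:: a; b; c] \o val), (nth 0 [:: al; be; ga] \o val); split.
- by case=> [[|[|[|]]]].
- by rewrite !big_ord_recl big_ord0 /= addr0 addrA.
- by rewrite !big_ord_recl big_ord0 /= addr0 addrA.
Qed.

End Convexity.

Section RowSpace.
Variable R : realType.
Implicit Types (m k : nat).

Lemma ler_eps_scale (x y M : R) : 0 <= M ->
  (forall e, 0 < e -> x <= y + e * M) -> x <= y.
Proof.
move=> M0 h; apply/ler_addgt0Pr => e e0.
have M1 : 0 < M + 1 by lra.
apply: le_trans (h (e / (M + 1)) (divr_gt0 e0 M1)) _.
rewrite lerD2l mulrAC ler_pdivrMr //; nra.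
Qed.

Lemma submxB m1 m2 n (A B : 'M[R]_(m1, n)) (C : 'M[R]_(m2, n)) :
  (A <= C)%MS -> (B <= C)%MS -> (A - B <= C)%MS.
Proof. by move=> hA hB; rewrite addmx_sub // -scaleN1r scalemx_sub. Qed.

(* Take a maximal linearly independent family of such directions [row i B]. *)
Lemma exists_rowspace_basis m (C : set 'rV[R]_m) c0 : C c0 ->
  exists k (B : 'M[R]_(k, m)),
    (forall i, C (c0 + row i B)) /\ (forall c, C c -> (c - c0 <= B)%MS).
Proof.
move=> Cc0.
pose P k := `[< exists B : 'M[R]_(k, m), row_free B /\ forall i, C (c0 + row i B) >].
have P0 : exists i, P i.
  by exists 0%N; apply/asboolP; exists 0; split; [rewrite /row_free mxrank0 | case].
have Pub i : P i -> (i <= m)%N.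
  by move=> /asboolP [B [fB _]]; move/eqP: fB => <-; exact: rank_leq_col.
case: (ex_maxnP P0 Pub) => k /asboolP [B [fB CB]] kmax.
exists k, B; split => // c Cc; apply/negPn/negP; set v := c - c0 => nvB.
have : P (1 + k)%N.
  apply/asboolP; exists (col_mx v B); split.
    have [hle heq] := mxrank_leqif_sup (addsmxSr v B).
    have lt : (\rank B < \rank (v + B)%MS)%N.
      by rewrite ltn_neqAle hle andbT heq addsmx_sub (negbTE nvB).
    move: fB lt => /eqP ->; rewrite (addsmxE v B).1 => lt.
    by rewrite /row_free eqn_leq rank_leq_row.
  move=> i; rewrite -(splitK i); case: (split i) => j /=.
    by rewrite rowKu row_id /v addrC subrK.
  by rewrite rowKd.
by move/kmax; rewrite add1n ltnn.
Qed.

Lemma eclosure_rowspace m k (B : 'M[R]_(k, m)) (C : set 'rV[R]_m) c0 :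
  (forall c, C c -> (c - c0 <= B)%MS) ->
  forall w, eclosure C w -> (w - c0 <= B)%MS.
Proof.
move=> hC w hw; rewrite submxE; apply/eqP/rowP => j; rewrite [in RHS]mxE.
set K := cokermx B; apply/eqP; rewrite -normr_le0.
apply: (@ler_eps_scale _ _ (\sum_(i < m) `|K i j|)) => [|e e0]; first exact: sumr_ge0.
have [c Cc hc] := hw e e0; rewrite add0r.
have -> : (w - c0) *m K = (w - c) *m K.
  have /eqP hc0 : (c - c0) *m K == 0 by rewrite -submxE; apply: hC.
  by rewrite -(subrKA c) mulmxDl hc0 addr0.
apply: mulmx_coord_bound => i; rewrite !mxE ltW //; exact: coord_lt_sqdist.
Qed.

Lemma aff_rowspace m k (B : 'M[R]_(k, m)) (O : set 'rV[R]_m) c0 :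
  (forall c, O c -> (c - c0 <= B)%MS) ->
  forall w, aff O w -> (w - c0 <= B)%MS.
Proof.
move=> hO w [N [p [c [Op s1 ->]]]].
have -> : \sum_(i < N) c i *: p i - c0 = \sum_(i < N) c i *: (p i - c0).
  rewrite -[c0 in LHS]scale1r -s1 scaler_suml -sumrB.
  by apply: eq_bigr => i _; rewrite scalerBr.
by apply: summx_sub => i _; apply: scalemx_sub; apply: hO.
Qed.

End RowSpace.

Section LocalLift.
Variable R : realType.
Implicit Types (m p k : nat).

Lemma near_barycenter_simplex k (mu : 'rV[R]_k) :
  let u := k.+1%:R^-1 in (forall i, `|mu 0 i - u| <= u ^+ 2) ->
  (forall i, 0 <= mu 0 i) /\ \sum_i mu 0 i <= 1.
Proof.
move=> u hmu; have u0 : 0 < u by rewrite invr_gt0 ltr0n.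
have u1 : u <= 1 by rewrite invf_le1 ?ltr0n // ler1n.
have ku : k%:R * u = 1 - u.
  have k1 : k%:R + 1 != 0 :> R by rewrite natr1 pnatr_eq0.
  by rewrite /u -natr1; field.
split => [i|].
  by have := hmu i; rewrite ler_norml => /andP [h _]; nra.
apply: le_trans (_ : \sum_(i < k) (u + u ^+ 2) <= 1).
  by apply: ler_sum => i _; have := hmu i; rewrite ler_norml lerBlDl => /andP [_].
rewrite sumr_const card_ord -mulr_natl mulrDr expr2 mulrA ku; nra.
Qed.

Lemma barycenter_nbhd m k (B : 'M[R]_(k, m)) c0 :
  let g := c0 + const_mx k.+1%:R^-1 *m B in
  exists2 r, 0 < r & forall v, (v - c0 <= B)%MS -> (forall j, `|(v - g) 0 j| <= r) ->
    exists mu : 'rV[R]_k, [/\ forall i, 0 <= mu 0 i, \sum_i mu 0 i <= 1 & v = c0 + mu *m B].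
Proof.
move=> g; set u : R := k.+1%:R^-1; set P' := pinvmx B.
set M := 1 + \sum_j \sum_i `|P' j i|.
have M1 : 1 <= M by rewrite lerDl; apply: sumr_ge0 => j _; apply: sumr_ge0.
have u0 : 0 < u by rewrite invr_gt0 ltr0n.
exists (u ^+ 2 / M); first by rewrite divr_gt0 ?exprn_gt0 //; lra.
move=> v vB vg; pose mu := const_mx u + (v - g) *m P'.
have vgB : (v - g <= B)%MS by rewrite /g opprD addrA submxB // submxMl.
have [] := @near_barycenter_simplex _ mu.
  move=> i; have -> : mu 0 i - u = ((v - g) *m P') 0 i.
    by rewrite /mu mxE [const_mx _ _ _]mxE addrAC subrr add0r.
  apply: le_trans (mulmx_coord_bound P' i vg) _.
  rewrite mulrAC ler_pdivrMr ?(lt_le_trans ltr01 M1) // ler_wpM2l ?exprn_ge0 ?ltW //.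
  have : \sum_j `|P' j i| <= \sum_j \sum_i `|P' j i|.
    by apply: ler_sum => j _; rewrite (bigD1 i) //= lerDl sumr_ge0.
  rewrite /M; lra.
move=> mu0 mu1; exists mu; split => //.
by rewrite /mu mulmxDl mulmxKpV // addrA addrC /g subrK.
Qed.

Lemma ri_extend m (O : set 'rV[R]_m) a g : ri O a -> O g ->
  exists2 eta, 0 < eta & O (a + eta *: (a - g)).
Proof.
move=> [Oa [d d0 hri]] Og; have s0 := sqdist_ge0 a g.
have s1 : 0 < 1 + sqdist a g by lra.
set eta := d / (1 + sqdist a g).
have eta0 : 0 < eta by rewrite divr_gt0.
have etaE : eta * (1 + sqdist a g) = d by rewrite mulfVK ?gt_eqF.
exists eta => //; apply: hri; split.
  rewrite /eball /= sqdist_translate -etaE.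
  by change (eta ^+ 2 * sqdist a g < (eta * (1 + sqdist a g)) ^+ 2); nra.
have -> : a + eta *: (a - g) = (1 + eta) *: a + (- eta) *: g + 0 *: g.
  by apply/rowP => j; rewrite !mxE; ring.
by apply: aff_comb3 => //; ring.
Qed.

Lemma simplex_lift p m k (Ch : set 'rV[R]_p) (P : 'M[R]_(p, m)) c0 (B : 'M[R]_(k, m)) :
  convex_set Ch -> [set z *m P | z in Ch] c0 ->
  (forall i, [set z *m P | z in Ch] (c0 + row i B)) ->
  exists zh0 (Bh : 'M[R]_(k, p)), [/\ zh0 *m P = c0, Bh *m P = B &
    forall mu : 'rV[R]_k, (forall i, 0 <= mu 0 i) -> \sum_i mu 0 i <= 1 ->
      Ch (zh0 + mu *m Bh)].
Proof.
move=> cCh [zh0 Chz0 ez0] CB.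
have /choice [zhf zhfP] : forall i, exists zh, Ch zh /\ zh *m P = c0 + row i B.
  by move=> i; case: (CB i) => zh ? ?; exists zh.
exists zh0, (\matrix_(i < k) (zhf i - zh0)); split => //.
  apply/row_matrixP => i; rewrite row_mul rowK mulmxBl (zhfP i).2 ez0.
  by rewrite addrC addKr.
apply: convex_set_simplex => // i; rewrite rowK addrC subrK; exact: (zhfP i).1.
Qed.

Lemma closure_basis m (C O : set 'rV[R]_m) a :
  C `<=` O -> O `<=` eclosure C -> O a ->
  exists c0 k (B : 'M[R]_(k, m)), [/\ C c0, forall i, C (c0 + row i B) &
    forall w, aff O w -> (w - c0 <= B)%MS].
Proof.
move=> CO OC Oa; have [c0 Cc0 _] := OC a Oa 1 ltr01.
have [k [B [CB subB]]] := exists_rowspace_basis Cc0.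
exists c0, k, B; split => //; apply: aff_rowspace => w Ow.
by apply: (eclosure_rowspace subB); apply: OC.
Qed.

Lemma aff_basis m (C O : set 'rV[R]_m) a :
  C `<=` O -> O `<=` eclosure C -> O a ->
  exists k (B : 'M[R]_(k, m)), (forall w, aff O w -> (w - a <= B)%MS) /\
    forall i s, aff O (a + s *: row i B).
Proof.
move=> CO OC Oa; have [c0 [k [B [Cc0 CB hA]]]] := closure_basis CO OC Oa.
exists k, B; split => [w hw|i s].
  have -> : w - a = (w - c0) - (a - c0) by rewrite opprB subrKA.
  by apply: submxB; apply: hA => //; exact: aff_self.
have -> : a + s *: row i B = 1 *: a + s *: (c0 + row i B) + (- s) *: c0.
  by apply/rowP => j; rewrite !mxE; ring.
by apply: aff_comb3 => //; [exact: CO | exact: CO | rewrite addrK].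
Qed.

(* [a = lam *: g + (1 - lam) *: a'] for [a' := a + eta *: (a - g)]; solving
   [w = lam *: w' + (1 - lam) *: q] for [w'] magnifies errors by [1 / lam]. *)
Lemma rescale_coord_dist m (a g w q : 'rV[R]_m) eta lam e j :
  0 < eta -> lam = eta / (1 + eta) ->
  `|w 0 j - a 0 j| < e -> `|q 0 j - (a + eta *: (a - g)) 0 j| < e ->
  `|(lam^-1 *: (w - (1 - lam) *: q) - g) 0 j| <= lam^-1 * (2 * e).
Proof.
move=> eta0 lamE hw hq.
have lam0 : 0 < lam by rewrite lamE divr_gt0 //; lra.
have lam1 : 1 - lam = (1 + eta)^-1 by rewrite lamE; field; lra.
have -> : (lam^-1 *: (w - (1 - lam) *: q) - g) 0 j =
    lam^-1 * ((w 0 j - a 0 j) - (1 - lam) * (q 0 j - (a + eta *: (a - g)) 0 j)).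
  rewrite !mxE lamE; field; lra.
rewrite normrM gtr0_norm ?invr_gt0 //; apply: ler_wpM2l; first by rewrite invr_ge0 ltW.
apply: le_trans (ler_normB _ _) _; rewrite normrM (@ger0_norm _ (1 - lam)); last first.
  by rewrite lam1 invr_ge0; lra.
have : 1 - lam <= 1 by lra.
have := normr_ge0 (q 0 j - (a + eta *: (a - g)) 0 j); nra.
Qed.

Lemma normr_convex_comb (l x y : R) : 0 <= l <= 1 ->
  `|l * x + (1 - l) * y| <= `|x| + `|y|.
Proof.
move=> /andP [l0 l1]; apply: le_trans (ler_normD _ _) _; rewrite !normrM.
rewrite (ger0_norm l0) (@ger0_norm _ (1 - l)); last by lra.
have := normr_ge0 x; have := normr_ge0 y; nra.
Qed.

Lemma simplex_coord_bound p k (z0 : 'rV[R]_p) (Bh : 'M[R]_(k, p)) (mu : 'rV[R]_k) j :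
  (forall i, 0 <= mu 0 i) -> \sum_i mu 0 i <= 1 ->
  `|(z0 + mu *m Bh) 0 j| <= `|z0 0 j| + \sum_i `|Bh i j|.
Proof.
move=> mu0 mu1; rewrite mxE (le_trans (ler_normD _ _)) // lerD2l mxE.
apply: le_trans (ler_norm_sum _ _ _) _; apply: ler_sum => i _.
rewrite normrM ger0_norm // ler_piMl //; apply: le_trans mu1.
by rewrite (bigD1 i) //= lerDl sumr_ge0.
Qed.

Lemma simplex_comb_coord_bound p k (z0 q : 'rV[R]_p) (Bh : 'M[R]_(k, p)) (mu : 'rV[R]_k) l j :
  0 <= l <= 1 -> (forall i, 0 <= mu 0 i) -> \sum_i mu 0 i <= 1 ->
  `|(l *: (z0 + mu *m Bh) + (1 - l) *: q) 0 j| <=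
    \sum_j (`|z0 0 j| + \sum_i `|Bh i j| + `|q 0 j|).
Proof.
move=> l01 mu0 mu1; have := simplex_coord_bound z0 Bh j mu0 mu1.
set S := z0 + mu *m Bh => hS.
have -> : (l *: S + (1 - l) *: q) 0 j = l * S 0 j + (1 - l) * q 0 j by rewrite !mxE.
rewrite (le_trans (normr_convex_comb _ _ l01)) //.
rewrite (@le_trans _ _ (`|z0 0 j| + \sum_i `|Bh i j| + `|q 0 j|)) ?lerD2r //.
by rewrite (bigD1 j) //= lerDl sumr_ge0 // => i _; rewrite !addr_ge0 ?sumr_ge0.
Qed.

Lemma ri_local_lift p m (Ch : set 'rV[R]_p) (P : 'M[R]_(p, m)) (O : set 'rV[R]_m) a :
  convex_set Ch -> [set z *m P | z in Ch] `<=` O ->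
  O `<=` eclosure [set z *m P | z in Ch] -> ri O a ->
  exists2 d, 0 < d & exists T, forall w, aff O w -> sqdist w a < d ^+ 2 ->
    exists z, [/\ Ch z, z *m P = w & forall j, `|z 0 j| <= T].
Proof.
move=> cCh CO OC ra.
have [c0 [k [B [Cc0 CB hA]]]] := closure_basis CO OC ra.1.
have [zh0 [Bh [ez0 eBh simp]]] := simplex_lift cCh Cc0 CB.
have imP mu : (zh0 + mu *m Bh) *m P = c0 + mu *m B by rewrite mulmxDl -mulmxA eBh ez0.
have [r r0 bary] := barycenter_nbhd B c0.
set g := c0 + _ *m B in bary.
have Og : O g.
  have [|beta0 beta1] := @near_barycenter_simplex k (const_mx k.+1%:R^-1).
    by move=> i; rewrite mxE subrr normr0 exprn_ge0 // invr_ge0.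
  by apply: CO; exists (zh0 + const_mx k.+1%:R^-1 *m Bh); [apply: simp | rewrite imP].
have [eta eta0 Oa2] := ri_extend ra Og.
set lam := eta / (1 + eta).
have lam0 : 0 < lam by rewrite divr_gt0 //; lra.
have lam1 : lam < 1 by rewrite ltr_pdivrMr //; lra.
have eps0 : 0 < lam * r / 2 by rewrite divr_gt0 // mulr_gt0.
have [_ [qh Chq <-] hq] := OC _ Oa2 _ eps0.
exists (lam * r / 2) => //.
exists (\sum_j (`|zh0 0 j| + \sum_i `|Bh i j| + `|qh 0 j|)) => w hw hwa.
set q := qh *m P in hq.
have Oq : O q by apply: CO; exists qh.
set gw := lam^-1 *: (w - (1 - lam) *: q).
have gwB : (gw - c0 <= B)%MS.
  have -> : gw - c0 = lam^-1 *: ((w - c0) - (1 - lam) *: (q - c0)).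
    by apply/rowP => j; rewrite !mxE; field; rewrite gt_eqF.
  by apply/scalemx_sub/submxB; [exact: hA | apply/scalemx_sub/hA/aff_self].
have [mu [mu0 mu1 emu]] : exists mu : 'rV[R]_k,
    [/\ forall i, 0 <= mu 0 i, \sum_i mu 0 i <= 1 & gw = c0 + mu *m B].
  apply: bary => // j; rewrite -[r](_ : lam^-1 * (2 * (lam * r / 2)) = r); last first.
    by field; rewrite gt_eqF.
  apply: (rescale_coord_dist eta0 (erefl lam)); first exact: coord_lt_sqdist eps0 hwa.
  by rewrite distrC; exact: coord_lt_sqdist eps0 hq.
exists (lam *: (zh0 + mu *m Bh) + (1 - lam) *: qh); split.
- by apply: cCh => //; [exact: simp | apply/andP; split; lra].
- rewrite mulmxDl -!scalemxAl imP -emu /gw scalerA mulfV ?gt_eqF // scale1r.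
  by rewrite subrK.
- by move=> j; apply: simplex_comb_coord_bound => //; apply/andP; split; lra.
Qed.

End LocalLift.

Section Segment.
Variable R : realType.
Implicit Types (m p : nat).

Lemma ri_segment_lift p m (Ch : set 'rV[R]_p) (P : 'M[R]_(p, m)) (O : set 'rV[R]_m) x0 :
  convex_set Ch -> [set z *m P | z in Ch] `<=` O ->
  O `<=` eclosure [set z *m P | z in Ch] -> ri O x0 ->
  exists T, forall lam, 0 < lam -> lam <= 1 -> exists2 eps, 0 < eps &
    forall x zc, O x -> Ch zc -> sqdist x (zc *m P) < eps ^+ 2 ->
    exists zh : 'rV[R]_p, [/\ forall j, `|zh 0 j| <= T, Ch (lam *: zh + (1 - lam) *: zc) &
       (lam *: zh + (1 - lam) *: zc) *m P = lam *: x0 + (1 - lam) *: x].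
Proof.
move=> cCh CO OC rx0; have [d d0 [T hT]] := ri_local_lift cCh CO OC rx0.
exists T => lam l0 l1; exists (lam * d); first exact: mulr_gt0.
move=> x zc Ox Chz hx; pose ka := (1 - lam) / lam.
have kaE : ka * lam = 1 - lam by rewrite /ka mulfVK // gt_eqF.
have ka0 : 0 <= ka by apply: divr_ge0; [lra | exact: ltW].
pose w := x0 + ka *: (x - zc *m P).
have hw : aff O w.
  have -> : w = 1 *: x0 + ka *: x + (- ka) *: (zc *m P).
    by apply/rowP => j; rewrite !mxE; ring.
  by apply: aff_comb3 => //; [exact: rx0.1 | apply: CO; exists zc | ring].
have hwd : sqdist w x0 < d ^+ 2.
  rewrite /w sqdist_translate; change (ka ^+ 2 * sqdist x (zc *m P) < d ^+ 2).
  have hS := sqdist_ge0 x (zc *m P).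
  apply: le_lt_trans (_ : ka ^+ 2 * (lam * d) ^+ 2 < _); first by rewrite ler_wpM2l ?sqr_ge0 ?ltW.
  by rewrite -exprMn mulrA kaE; nra.
have [zh [Chzh ezh bzh]] := hT w hw hwd.
exists zh; split => //; first by apply: cCh => //; apply/andP; split; lra.
rewrite mulmxDl -!scalemxAl ezh /w /ka; apply/rowP => j; rewrite !mxE; field.
by rewrite gt_eqF.
Qed.

Lemma sqdist_convex_comb_bound p (l : R) (Y zh zc : 'rV[R]_p) T d :
  0 <= l <= 1 -> (forall j, `|zh 0 j| <= T) -> 0 < d -> sqdist Y zc < d ^+ 2 ->
  sqdist Y (l *: zh + (1 - l) *: zc) <= p%:R * (l * (\sum_j `|Y 0 j| + T) + d) ^+ 2.
Proof.
move=> /andP [l0 l1] hT d0 hY; apply: sqdist_le_coord => j; rewrite !mxE.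
have hj := coord_lt_sqdist j d0 hY.
have yj : `|Y 0 j| <= \sum_j `|Y 0 j| by rewrite (bigD1 j) //= lerDl sumr_ge0.
have -> : Y 0 j - (l * zh 0 j + (1 - l) * zc 0 j) =
  l * (Y 0 j - zh 0 j) + (1 - l) * (Y 0 j - zc 0 j) by ring.
apply: le_trans (ler_normD _ _) _.
rewrite !normrM (ger0_norm l0) (@ger0_norm _ (1 - l)); last by lra.
have := ler_normB (Y 0 j) (zh 0 j); have := hT j; have := normr_ge0 (Y 0 j - zc 0 j).
nra.
Qed.

Lemma ri_segment_approx p m (Ch : set 'rV[R]_p) (P : 'M[R]_(p, m)) (O : set 'rV[R]_m) x0 :
  convex_set Ch -> [set z *m P | z in Ch] `<=` O ->
  O `<=` eclosure [set z *m P | z in Ch] -> ri O x0 ->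
  (forall u v, sqdist (u *m P) (v *m P) <= sqdist u v) ->
  forall Y, eclosure Ch Y -> O (Y *m P) ->
  exists2 M, 0 <= M & forall lam d, 0 < lam -> lam <= 1 -> 0 < d ->
    exists2 Z, Ch Z & Z *m P = lam *: x0 + (1 - lam) *: (Y *m P) /\
      sqdist Y Z <= p%:R * (lam * M + d) ^+ 2.
Proof.
move=> cCh CO OC rx0 Pcontr Y clY OY.
have [T hT] := ri_segment_lift cCh CO OC rx0.
exists (\sum_j `|Y 0 j| + `|T|); first by rewrite addr_ge0 ?sumr_ge0.
move=> lam d l0 l1 d0; have [eps eps0 hseg] := hT lam l0 l1.
have e0 : 0 < Num.min eps d by rewrite lt_min eps0 d0.
have [zc Chzc hzc] := clY _ e0.
have lt_sq e : Num.min eps d <= e -> sqdist Y zc < e ^+ 2.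
  move=> le; apply: lt_le_trans hzc _.
  by rewrite lerXn2r // nnegrE ltW // (lt_le_trans e0).
have [zh [bzh Chz ez]] : exists zh : 'rV[R]_p, [/\ forall j, `|zh 0 j| <= T,
    Ch (lam *: zh + (1 - lam) *: zc) &
    (lam *: zh + (1 - lam) *: zc) *m P = lam *: x0 + (1 - lam) *: (Y *m P)].
  apply: hseg => //; apply: le_lt_trans (Pcontr _ _) _.
  by apply: lt_sq; rewrite ge_min lexx.
exists (lam *: zh + (1 - lam) *: zc) => //; split => //.
apply: sqdist_convex_comb_bound.
- by apply/andP; split; [exact: ltW|].
- by move=> j; apply: le_trans (bzh j) (ler_norm T).
- exact: d0.
- by apply: lt_sq; rewrite ge_min lexx orbT.
Qed.

End Segment.

Section AffineMinorant.
Variables (R : realType) (k : nat) (W : 'rV[R]_k -> R -> Prop) (a : R).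
Hypothesis W_convex : forall v1 t1 v2 t2 l, W v1 t1 -> W v2 t2 -> 0 <= l <= 1 ->
  W (l *: v1 + (1 - l) *: v2) (l * t1 + (1 - l) * t2).
Hypothesis W_base : forall t, W 0 t -> a <= t.
Hypothesis W_pos : forall j : 'I_k, exists s t, 0 < s /\ W (s *: delta_mx 0 j) t.
Hypothesis W_neg : forall j : 'I_k, exists s t, 0 < s /\ W (- s *: delta_mx 0 j) t.

Definition supported_below (j : nat) (v : 'rV[R]_k) :=
  forall i : 'I_k, (j <= i)%N -> v 0 i = 0.

Definition minorant_below (j : nat) (c : 'rV[R]_k) :=
  forall v t, W v t -> supported_below j v -> a + dotv c v <= t.

Lemma slope_le (s1 s2 F1 F2 : R) : 0 < s1 -> s2 < 0 ->
  0 <= (- s2 / (s1 - s2)) * F1 + (1 - (- s2 / (s1 - s2))) * F2 -> F2 / s2 <= F1 / s1.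
Proof.
move=> s10 s20 h; have D : 0 < s1 - s2 by lra.
have h2 : 0 <= - s2 * F1 + s1 * F2.
  have -> : - s2 * F1 + s1 * F2 =
      ((- s2 / (s1 - s2)) * F1 + (1 - (- s2 / (s1 - s2))) * F2) * (s1 - s2).
    by field; rewrite gt_eqF.
  by rewrite mulr_ge0 // ltW.
rewrite ler_ndivrMr // mulrAC ler_pdivrMr //; nra.
Qed.

(* Mix the two points so as to cancel [v 0 J]: the mixture is where [c] already works. *)
Lemma slack_slope_le j (J : 'I_k) c : val J = j -> minorant_below j c ->
  forall v1 t1 v2 t2, W v1 t1 -> supported_below j.+1 v1 -> 0 < v1 0 J ->
  W v2 t2 -> supported_below j.+1 v2 -> v2 0 J < 0 ->
  (t2 - a - dotv c v2) / v2 0 J <= (t1 - a - dotv c v1) / v1 0 J.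
Proof.
move=> eJ hc v1 t1 v2 t2 W1 Z1 p1 W2 Z2 n2.
have D : 0 < v1 0 J - v2 0 J by lra.
set l := - v2 0 J / (v1 0 J - v2 0 J).
have l01 : 0 <= l <= 1.
  apply/andP; split; first by rewrite divr_ge0 ?ltW //; lra.
  by rewrite ler_pdivrMr //; lra.
have zc : supported_below j (l *: v1 + (1 - l) *: v2).
  move=> i; rewrite leq_eqVlt => /orP [/eqP ei | lt].
    have -> : i = J by apply: val_inj; rewrite eJ.
    by rewrite !mxE /l; field; rewrite gt_eqF.
  by rewrite !mxE Z1 // Z2 // !mulr0 addr0.
apply: slope_le => //; have := hc _ _ (W_convex W1 W2 l01) zc.
rewrite -subr_ge0 dotvDr !dotvZr; rewrite -/l.
suff -> : l * (t1 - a - dotv c v1) + (1 - l) * (t2 - a - dotv c v2) =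
  l * t1 + (1 - l) * t2 - (a + (l * dotv c v1 + (1 - l) * dotv c v2)) by [].
ring.
Qed.

Lemma minorant_below_succ j c : (j < k)%N -> minorant_below j c ->
  exists c', minorant_below j.+1 c'.
Proof.
move=> jk hc; pose J := Ordinal jk.
pose F v t := t - a - dotv c v.
pose A := [set r | exists v t, [/\ W v t, supported_below j.+1 v, v 0 J < 0 &
  r = F v t / v 0 J]].
have key := slack_slope_le (erefl : val J = j) hc.
have ZJ r : supported_below j.+1 (r *: delta_mx 0 J).
  move=> i ji; rewrite !mxE.
  have -> : (i == J) = false by apply/negbTE/eqP => eiJ; move: ji; rewrite eiJ ltnn.
  by rewrite andbF mulr0.
have eJ r : (r *: delta_mx (0 : 'I_1) J) 0 J = r by rewrite !mxE !eqxx mulr1.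
have [s [t [s0 Wp]]] := W_pos J.
have [s' [t' [s0' Wn]]] := W_neg J.
have hs : has_sup A.
  split.
    exists (F (- s' *: delta_mx 0 J) t' / (- s')), (- s' *: delta_mx 0 J), t'.
    by rewrite eJ oppr_lt0.
  exists (F (s *: delta_mx 0 J) t / s) => r [v2 [t2 [W2 Z2 n2 ->]]].
  have p1 : 0 < (s *: delta_mx (0 : 'I_1) J) 0 J by rewrite eJ.
  by have := key _ _ _ _ Wp (ZJ s) p1 W2 Z2 n2; rewrite eJ.
exists (c + sup A *: delta_mx 0 J) => v t0 Wv Zv.
rewrite dotvDl dotvZl dotv_delta.
case: (ltrgtP (v 0 J) 0) => hv.
- have : F v t0 / v 0 J <= sup A by apply: sup_upper_bound => //; exists v, t0.
  by rewrite ler_ndivrMr // /F => h; lra.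
- have : sup A <= F v t0 / v 0 J.
    by apply: ge_sup; [exact: hs.1 | move=> r [v2 [t2 [W2 Z2 n2 ->]]]; apply: key].
  by rewrite ler_pdivlMr // /F => h; lra.
- rewrite hv mulr0 addr0; apply: hc => // i; rewrite leq_eqVlt => /orP [/eqP ei | lt].
    by have -> : i = J by apply: val_inj.
  exact: Zv.
Qed.

Lemma exists_affine_minorant : exists c, forall v t, W v t -> a + dotv c v <= t.
Proof.
suff [c hc] : exists c, minorant_below k c.
  by exists c => v t Wv; apply: hc => // i; rewrite leqNgt ltn_ord.
suff : forall j, (j <= k)%N -> exists c, minorant_below j c by apply.
elim=> [_|j IH jk]; last by have [c hc] := IH (ltnW jk); exact: minorant_below_succ hc.
exists 0 => v t Wv v0; have {}v0 : v = 0 by apply/rowP => i; rewrite v0 // mxE.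
by move: Wv; rewrite v0 dotv0r addr0; apply: W_base.
Qed.

End AffineMinorant.

Section Projection.
Variable R : realType.

Definition prj (a b : nat) : 'M[R]_(a + b, a) := col_mx 1%:M 0.

Lemma prj_row a b (x : 'rV[R]_a) (u : 'rV[R]_b) : row_mx x u *m prj a b = x.
Proof. by rewrite /prj mul_row_col mulmx1 mulmx0 addr0. Qed.

Lemma prj_lsub a b (z : 'rV[R]_(a + b)) : z *m prj a b = lsubmx z.
Proof. by rewrite -{1}(hsubmxK z) prj_row. Qed.

Lemma sqdist_prj a b (u v : 'rV[R]_(a + b)) :
  sqdist (u *m prj a b) (v *m prj a b) <= sqdist u v.
Proof. by rewrite !prj_lsub -{2}(hsubmxK u) -{2}(hsubmxK v) sqdist_row_mxl. Qed.

Lemma eclosure_prj a b (C : set 'rV[R]_(a + b)) w u :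
  eclosure C (row_mx w u) -> eclosure [set z *m prj a b | z in C] w.
Proof.
move=> h e e0; have [c Cc hc] := h e e0; exists (c *m prj a b); first by exists c.
by apply: le_lt_trans hc; rewrite -{1}(prj_row w u) sqdist_prj.
Qed.

Lemma row_mx_scalar q (z : 'rV[R]_(q + 1)) : z = row_mx (lsubmx z) ((rsubmx z) 0 0)%:M.
Proof. by rewrite -mx11_scalar hsubmxK. Qed.

Lemma scalar_mx1_comb (l u t1 t2 : R) :
  l *: (t1%:M : 'M[R]_1) + u *: t2%:M = (l * t1 + u * t2)%:M.
Proof. by apply/matrixP => i j; rewrite !mxE !ord1 eqxx !mulr1n. Qed.

End Projection.

Section Separation.
Variables (R : realType) (q : nat) (S : set 'rV[R]_(q + 1)) (O : set 'rV[R]_q).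
Hypothesis S_convex : convex_set S.
Hypothesis SO : [set z *m prj R q 1 | z in S] `<=` O.
Hypothesis OS : O `<=` eclosure [set z *m prj R q 1 | z in S].
Hypothesis ri_O0 : ri O 0.

Lemma ri_affine_minorant a : (forall t, S (row_mx 0 t%:M) -> a <= t) ->
  exists ys, forall y t, S (row_mx y t%:M) -> a + dotv ys y <= t.
Proof.
move=> base.
have [k [B [hsub hrow]]] := aff_basis SO OS ri_O0.1.
have [d d0 [T hT]] := ri_local_lift S_convex SO OS ri_O0.
pose W (mu : 'rV[R]_k) (t : R) := S (row_mx (mu *m B) t%:M).
have axis (j : 'I_k) (sg : R) : sg ^+ 2 = 1 ->
    exists s t, 0 < s /\ W ((sg * s) *: delta_mx 0 j) t.
  move=> sg1; pose s := d / (1 + dotv (row j B) (row j B)).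
  have s0 : 0 < s by rewrite divr_gt0 // ltr_wpDr // dotvv_ge0.
  have hd : sqdist (0 + (sg * s) *: row j B) 0 < d ^+ 2.
    rewrite sqdist_translate exprMn sg1 mul1r; have v0 := dotvv_ge0 (row j B).
    have sE : s * (1 + dotv (row j B) (row j B)) = d by rewrite /s mulfVK // gt_eqF //; lra.
    by rewrite -sE; nra.
  have [z [Sz ez _]] := hT _ (hrow j (sg * s)) hd.
  exists s, ((rsubmx z) 0 0); split => //; rewrite /W.
  by rewrite -scalemxAl -rowE -(add0r (_ *: row j B)) -ez prj_lsub -row_mx_scalar.
have [c hc] : exists c : 'rV[R]_k, forall v t, W v t -> a + dotv c v <= t.
  apply: exists_affine_minorant.
  - move=> v1 t1 v2 t2 l W1 W2 l01; rewrite /W mulmxDl -!scalemxAl -scalar_mx1_comb.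
    by rewrite -add_row_mx -!scale_row_mx; exact: S_convex.
  - by move=> t; rewrite /W mul0mx; exact: base.
  - move=> j; have [s [t [s0 hs]]] := axis j 1 (expr1n _ _).
    by exists s, t; rewrite mul1r in hs.
  - move=> j; have [s [t [s0 hs]]] := axis j (-1) (etrans (sqrrN 1) (expr1n _ 2)).
    by exists s, t; rewrite mulN1r in hs.
exists (c *m (pinvmx B)^T) => y t Sy; rewrite -dotv_mulmx.
have Oy : O y by apply: SO; exists (row_mx y t%:M); rewrite ?prj_row.
have /mulmxKpV ey : (y <= B)%MS by rewrite -[y]subr0; apply/hsub/aff_self.
by apply: hc; rewrite /W ey.
Qed.

End Separation.

Section ClosureMinorant.
Variable R : realType.

Lemma affine_minorant_closure q (S : set 'rV[R]_(q + 1)) (ys : 'rV[R]_q) a :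
  (forall y t, S (row_mx y t%:M) -> a + dotv ys y <= t) ->
  forall y t, eclosure S (row_mx y t%:M) -> a + dotv ys y <= t.
Proof.
move=> hS y t cl; have M0 : 0 <= 1 + \sum_i `|ys 0 i| by rewrite addr_ge0 // sumr_ge0.
apply: (ler_eps_scale M0) => e e0.
have [z Sz hz] := cl e e0; move: Sz hz; rewrite [z]row_mx_scalar.
set y' := lsubmx z; set t' := rsubmx z 0 0 => Sz hz.
have hy := le_lt_trans (sqdist_row_mxl _ _ _ _) hz.
have ht := le_lt_trans (sqdist_row_mxr _ _ _ _) hz.
have := coord_lt_sqdist 0 e0 ht; rewrite !mxE eqxx !mulr1n.
have := dotv_dist ys e0 hy; have := hS _ _ Sz.
rewrite !ler_norml !ltr_norml => h /andP [h1 h2] /andP [h3 h4].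
have : e * (1 + \sum_i `|ys 0 i|) = e + e * \sum_i `|ys 0 i| by ring.
lra.
Qed.

End ClosureMinorant.

Section Numerics.
Variable R : realType.

Lemma exists_small_weight (M rho : R) : 0 <= M -> 0 < rho ->
  exists lam, [/\ 0 < lam, lam <= 1 & lam * M + rho / 2 <= rho].
Proof.
move=> M0 rho0; have D0 : 0 < 2 * (M + 1) + rho by lra.
exists (rho / (2 * (M + 1) + rho)); split; first by rewrite divr_gt0.
  by rewrite ler_pdivrMr //; lra.
rewrite -lerBrDr mulrAC ler_pdivrMr //; nra.
Qed.

Lemma sum_sqr_fraction_lt (K : nat) (e : R) : 0 < e ->
  K%:R * (e / (K%:R + 1)) ^+ 2 < e ^+ 2.
Proof.
move=> e0; have K0 : 0 <= K%:R :> R by rewrite ler0n.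
have K1 : 0 < K%:R + 1 :> R by lra.
have -> : K%:R * (e / (K%:R + 1)) ^+ 2 = e ^+ 2 * (K%:R / ((K%:R + 1) * (K%:R + 1))).
  by field; rewrite gt_eqF.
rewrite -[X in _ < X]mulr1 ltr_pM2l ?exprn_gt0 // ltr_pdivrMr ?mulr_gt0 //; nra.
Qed.

Lemma lee_fin_lb (x y : \bar R) :
  (forall a : R, (a%:E <= x)%E -> (a%:E <= y)%E) -> (x <= y)%E.
Proof.
case: x => [r h | h |]; [exact: h | | by rewrite leNye].
case: y h => [r h | // | h]; last by have := h 0%R (leey _).
by have := h (r + 1)%R (leey _); rewrite lee_fin gerDl ler10.
Qed.

End Numerics.

Section Duality.
Variables (R : realType) (n q : nat) (phi : 'rV[R]_n -> \bar R)
  (Theta : set 'rV[R]_n) (G : 'rV[R]_n -> set 'rV[R]_q).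

Lemma weak_duality : (dual_value phi Theta G <= primal_value phi Theta G)%E.
Proof.
apply: ge_ereal_sup => _ [ys _ <-]; apply/ereal_infP => _ [x [Tx Gx0] <-].
by apply: ereal_inf_lbound; exists x, 0; split => //; rewrite dotv0r sube0.
Qed.

Variables (C1 : set 'rV[R]_(n + 1)) (C2 : set 'rV[R]_n) (C3 : set 'rV[R]_(n + q)).
Hypothesis phi_gtNy : forall x, (-oo < phi x)%E.
Hypothesis C1_convex : convex_set C1.
Hypothesis C1_epi : C1 `<=` epigraph phi.
Hypothesis epi_C1 : epigraph phi `<=` eclosure C1.
Hypothesis C2_convex : convex_set C2.
Hypothesis C2_Theta : C2 `<=` Theta.
Hypothesis Theta_C2 : Theta `<=` eclosure C2.
Hypothesis C3_convex : convex_set C3.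
Hypothesis C3_graph : C3 `<=` sv_graph G.
Hypothesis graph_C3 : sv_graph G `<=` eclosure C3.

(* A convex set lying between the pairs [(y, t)] with [y \in G x] and [phi x <= t] for some
   [x \in Theta] and their closure. *)
Definition core : set 'rV[R]_(q + 1) := [set z | exists x y (t t' : R),
  [/\ z = row_mx y t%:M, C2 x, C3 (row_mx x y), C1 (row_mx x t'%:M) & t' <= t]].

Lemma core_convex : convex_set core.
Proof.
move=> _ _ l [x1 [y1 [t1 [u1 [-> h21 h31 h11 le1]]]]]
  [x2 [y2 [t2 [u2 [-> h22 h32 h12 le2]]]]] l01; have /andP [l0 l1] := l01.
exists (l *: x1 + (1 - l) *: x2), (l *: y1 + (1 - l) *: y2), (l * t1 + (1 - l) * t2),
  (l * u1 + (1 - l) * u2); split.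
- by rewrite !scale_row_mx add_row_mx scalar_mx1_comb.
- exact: C2_convex.
- by rewrite -add_row_mx -!scale_row_mx; apply: C3_convex.
- by rewrite -scalar_mx1_comb -add_row_mx -!scale_row_mx; apply: C1_convex.
- by rewrite lerD // ler_wpM2l //; lra.
Qed.

Lemma scalar_mx1_inj (t s : R) : (t%:M : 'M[R]_1) = s%:M -> t = s.
Proof. by move/matrixP => /(_ 0 0); rewrite !mxE eqxx !mulr1n. Qed.

Lemma core_feasible y t : core (row_mx y t%:M) ->
  exists x, [/\ Theta x, G x y & (phi x <= t%:E)%E].
Proof.
move=> [x [y' [t0 [t' [/eq_row_mx [<- /scalar_mx1_inj <-] C2x C3xy C1xt le]]]]].
exists x; split; first exact: C2_Theta.
  by have [x1 [y1 [/eq_row_mx [-> ->] ]]] := C3_graph C3xy.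
have [x1 [a1 [/eq_row_mx [<- /scalar_mx1_inj <-] pa]]] := C1_epi C1xt.
by rewrite (le_trans pa) // lee_fin.
Qed.

Lemma C1_fdom : [set z *m prj R n 1 | z in C1] `<=` fdom phi.
Proof.
move=> _ [z /C1_epi [x [a [-> pa]]] <-]; rewrite prj_row /fdom /=.
exact: le_lt_trans pa (ltry a).
Qed.

Lemma fdom_C1 : fdom phi `<=` eclosure [set z *m prj R n 1 | z in C1].
Proof.
move=> w; rewrite /fdom /=; have := phi_gtNy w.
case E: (phi w) => [r| |] // _ _; apply: (@eclosure_prj R n 1 C1 w r%:M).
by apply: epi_C1; exists w, r; rewrite E.
Qed.

Lemma C2_Theta_id : [set z *m 1%:M | z in C2] `<=` Theta.
Proof. by move=> _ [z hz <-]; rewrite mulmx1; apply: C2_Theta. Qed.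

Lemma Theta_C2_id : Theta `<=` eclosure [set z *m 1%:M | z in C2].
Proof.
move=> w Tw e e0; have [c Cc hc] := Theta_C2 Tw e0.
by exists c => //; exists c => //; rewrite mulmx1.
Qed.

Lemma C3_dom : [set z *m prj R n q | z in C3] `<=` sv_dom G.
Proof. by move=> _ [z /C3_graph [x [y [-> g]]] <-]; rewrite prj_row; exists y. Qed.

Lemma dom_C3 : sv_dom G `<=` eclosure [set z *m prj R n q | z in C3].
Proof.
move=> w [y gy]; apply: (@eclosure_prj R n q C3 w y); apply: graph_C3.
by exists w, y.
Qed.

Variable x0 : 'rV[R]_n.
Hypothesis ri_dom_x0 : ri (fdom phi) x0.
Hypothesis ri_Theta_x0 : ri Theta x0.
Hypothesis ri_svdom_x0 : ri (sv_dom G) x0.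

(* The three approximations are pulled towards [x0] with the same weight [lam], so that their
   [x]-components agree. *)
Lemma closure_core x y t : Theta x -> G x y -> (phi x <= t%:E)%E ->
  eclosure core (row_mx y t%:M).
Proof.
move=> Tx Gxy pxt e e0.
have fx : fdom phi x by rewrite /fdom /=; apply: le_lt_trans pxt (ltry t).
have E1 : eclosure C1 (row_mx x t%:M) by apply: epi_C1; exists x, t.
have E3 : eclosure C3 (row_mx x y) by apply: graph_C3; exists x, y.
have D1 : fdom phi (row_mx x t%:M *m prj R n 1) by rewrite prj_row.
have D2 : Theta (x *m 1%:M) by rewrite mulmx1.
have P2 (u v : 'rV[R]_n) : sqdist (u *m 1%:M) (v *m 1%:M) <= sqdist u v by rewrite !mulmx1.
have D3 : sv_dom G (row_mx x y *m prj R n q) by rewrite prj_row; exists y.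
have := ri_segment_approx C1_convex C1_fdom fdom_C1 ri_dom_x0 (@sqdist_prj R n 1) E1 D1.
have := ri_segment_approx C2_convex C2_Theta_id Theta_C2_id ri_Theta_x0
  P2 (Theta_C2 Tx) D2.
have := ri_segment_approx C3_convex C3_dom dom_C3 ri_svdom_x0 (@sqdist_prj R n q) E3 D3.
rewrite !prj_row !mulmx1 => -[M3 M30 approx3] [M2 _ approx2] [M1 M10 approx1].
set K := (n + q + (n + 1))%N; set rho := e / (K%:R + 1).
have rho0 : 0 < rho by rewrite divr_gt0 // ltr_wpDl ?ler0n.
have [lam [lam0 lam1 lamM]] := exists_small_weight (addr_ge0 M10 M30) rho0.
have d0 : 0 < rho / 2 by rewrite divr_gt0.
have lM1 : 0 <= lam * M1 by rewrite mulr_ge0 // ltW.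
have lM3 : 0 <= lam * M3 by rewrite mulr_ge0 // ltW.
have [Z1 C1Z1 [/eqP ez1 hZ1]] := approx1 _ _ lam0 lam1 d0.
have [Z2 C2Z2 [ez2 _]] := approx2 _ _ lam0 lam1 d0.
have [Z3 C3Z3 [/eqP ez3 hZ3]] := approx3 _ _ lam0 lam1 d0.
move: ez1 ez2 ez3; rewrite !prj_lsub mulmx1 => /eqP ez1 ez2 /eqP ez3.
exists (row_mx (rsubmx Z3) (rsubmx Z1 0 0)%:M).
  exists Z2, (rsubmx Z3), (rsubmx Z1 0 0), (rsubmx Z1 0 0); split => //.
  - by rewrite ez2 -ez3 hsubmxK.
  - by rewrite -mx11_scalar ez2 -ez1 hsubmxK.
rewrite sqdist_row_mx -mx11_scalar; apply: le_lt_trans (sum_sqr_fraction_lt K e0).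
rewrite -/rho /K natrD mulrDl; apply: lerD.
  apply: le_trans (sqdist_rsubmx x _ _) _; apply: le_trans hZ3 _.
  apply: ler_wpM2l; first exact: ler0n.
  nra.
apply: le_trans (sqdist_rsubmx x _ _) _; apply: le_trans hZ1 _.
apply: ler_wpM2l; first exact: ler0n.
nra.
Qed.

Hypothesis ri_image_0 : ri (sv_image G (Theta `&` fdom phi)) 0.

Lemma core_image : [set z *m prj R q 1 | z in core] `<=` sv_image G (Theta `&` fdom phi).
Proof.
move=> _ [z Sz <-]; move: Sz; rewrite [z]row_mx_scalar prj_row => Sz.
have [x [Tx Gx px]] := core_feasible Sz; exists x => //; split => //.
by rewrite /fdom /=; apply: le_lt_trans px (ltry _).
Qed.

Lemma image_core :
  sv_image G (Theta `&` fdom phi) `<=` eclosure [set z *m prj R q 1 | z in core].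
Proof.
move=> w [x [Tx]]; rewrite /fdom /=; have := phi_gtNy x.
case E: (phi x) => [r| |] // _ _ Gw; apply: (@eclosure_prj R q 1 core w r%:M).
by apply: closure_core Tx Gw _; rewrite E.
Qed.

Lemma dual_value_ge a :
  (a%:E <= primal_value phi Theta G)%E -> (a%:E <= dual_value phi Theta G)%E.
Proof.
move=> ha; have [ys hys] : exists ys, forall y t, core (row_mx y t%:M) -> a + dotv ys y <= t.
  apply: (ri_affine_minorant core_convex core_image image_core ri_image_0) => t S0t.
  have [x [Tx Gx px]] := core_feasible S0t.
  have hp : (primal_value phi Theta G <= phi x)%E by apply: ereal_inf_lbound; exists x.
  by rewrite -lee_fin (le_trans ha (le_trans hp px)).
apply: (@le_trans _ _ (dual_fun phi Theta G ys)); last first.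
  by apply: ereal_sup_ubound; exists ys.
apply/ereal_infP => _ [x [y [Tx Gxy ->]]]; have := phi_gtNy x.
case E: (phi x) => [r| |] // _; last by rewrite leey.
rewrite -EFinB lee_fin lerBrDr; apply: (affine_minorant_closure hys).
by apply: closure_core Tx Gxy _; rewrite E.
Qed.

End Duality.

Theorem theorem7p3 (R : realType) (n q : nat) (phi : 'rV[R]_n -> \bar R)
  (Theta : set 'rV[R]_n) (G : 'rV[R]_n -> set 'rV[R]_q) :
  proper_fun phi -> nearly_convex_fun phi ->
  nearly_convex Theta -> nearly_convex_sv G ->
  ri (fdom phi) `&` ri (sv_dom G) `&` ri Theta !=set0 ->
  ri (sv_image G (Theta `&` fdom phi)) 0 ->
  primal_value phi Theta G = dual_value phi Theta G.
Proof.
move=> [_ phi_gtNy] [C1 [cC1 C1E EC1]] [C2 [cC2 C2T TC2]] [C3 [cC3 C3G GC3]]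
  [x0 [[r1 r3] r2]] r0.
apply/eqP; rewrite eq_le weak_duality andbT; apply: lee_fin_lb => a.
exact: (dual_value_ge phi_gtNy cC1 C1E EC1 cC2 C2T TC2 cC3 C3G GC3 r1 r2 r3 r0).
Qed.
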